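(* Assume $M=m-2n\notin-2\mathbb{N}$. Let $H\subseteq\mathcal{P}$ be a subspace with $\dim H>1$ which is invariant and irreducible under the action of $G=SO(m)\times Sp(2n)$. Then every integration over the supersphere $T$ satisfies $T(f)=0$ for all $f\in H$.
   Context: Let $m,n\ge0$ be integers, $\mathbb{N}=\{0,1,2,\dots\}$. $\mathcal{P}=\mathbb{R}[x_1,\dots,x_m]\otimes\Lambda_{2n}$ is the real algebra generated by commuting $x_1,\dots,x_m$ and anticommuting $\theta_1,\dots,\theta_{2n}$ with $x_i\theta_j=\theta_jx_i$. $x^2=\sum_{j=1}^n\theta_{2j-1}\theta_{2j}-\sum_{j=1}^m x_j^2$. $Sp(2n)=\{D\in GL_{2n}(\mathbb{R}):D^TJD=J\}$ with $J$ block diagonal with $n$ blocks $\begin{pmatrix}0&1/2\\-1/2&0\end{pmatrix}$; $g=(A,D)\in SO(m)\times Sp(2n)$ acts on $f\in\mathcal{P}$ by $f\mapsto f(g\cdot x)$, the image under the algebra automorphism $x_i\mapsto\sum_kA_{ik}x_k$, $\theta_j\mapsto\sum_lD_{jl}\theta_l$. An integration over the supersphere is a linear functional $T:\mathcal{P}\to\mathbb{R}$ such that for all $f\in\mathcal{P}$: (1) $T(x^2f)=-T(f)$; (2) $T(f(g\cdot x))=T(f)$ for all $g\in SO(m)\times Sp(2n)$. *)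

From HB Require Import structures.
From mathcomp Require Import all_boot all_order all_algebra.
From mathcomp Require Import reals.
From mathcomp Require Import mpoly.

Set Implicit Arguments.
Unset Strict Implicit.
Unset Printing Implicit Defensive.

Import Order.TTheory GRing.Theory Num.Theory.
Local Open Scope ring_scope.

Section Superspace.
Variables (R : realType) (m n : nat).

(* Indices of the Grassmann generators theta_1..theta_{2n} are 'I_(2*n)
   (0-based: theta_{k+1} is index k). *)
Definition gidx := 'I_(2 * n).

(* P = R[x_1..x_m] (x) Lambda_{2n}: an element is f = sum_S f_S theta_S,
   theta_S = product of theta_j, j in S, in increasing order. *)
Definition superpoly := {ffun {set gidx} -> {mpoly R[m]}}.

(* sign of theta_A theta_B = sgnAB A B theta_(A u B) for disjoint A, B *)
Definition sgnAB (A B : {set gidx}) : {mpoly R[m]} :=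
  (-1) ^+ #|[set p : gidx * gidx | [&& p.1 \in A, p.2 \in B & (p.2 < p.1)%N]]|.

Definition smul (f g : superpoly) : superpoly :=
  [ffun S => \sum_(A : {set gidx}) \sum_(B : {set gidx} |
      (A :&: B == set0) && (A :|: B == S)) sgnAB A B * (f A * g B)].

Definition sembed (p : {mpoly R[m]}) : superpoly :=
  [ffun S => if S == set0 then p else 0].
Definition sone : superpoly := sembed 1.

Definition xgen (i : 'I_m) : superpoly := sembed 'X_i.
Definition thgen (j : gidx) : superpoly :=
  [ffun S => if S == [set j] then 1 else 0].

Lemma odd_idx_lt (j : 'I_n) : (2 * j < 2 * n)%N.
Proof. by rewrite ltn_pmul2l. Qed.
Lemma even_idx_lt (j : 'I_n) : (2 * j + 1 < 2 * n)%N.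
Proof.
have h := ltn_ord j.
have h2 : (2 * j.+1 <= 2 * n)%N by rewrite leq_mul2l.
by apply: leq_trans h2; rewrite mulnS add2n addn1.
Qed.
(* theta_{2j-1} and theta_{2j} (1-based), for j = 1..n, i.e. 0-based 2j', 2j'+1 *)
Definition th_first (j : 'I_n) : gidx := Ordinal (odd_idx_lt j).
Definition th_second (j : 'I_n) : gidx := Ordinal (even_idx_lt j).

Definition xsq : superpoly :=
  \sum_(j < n) smul (thgen (th_first j)) (thgen (th_second j))
  - \sum_(i < m) smul (xgen i) (xgen i).

(* the symplectic form J: block diagonal with blocks [[0,1/2],[-1/2,0]] *)
Definition Jsymp : 'M[R]_(2 * n) :=
  \matrix_(i, j)
    (if ((i : nat) == j.-1) && ~~ odd i && odd j then 2^-1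
     else if ((j : nat) == i.-1) && odd i && ~~ odd j then - 2^-1 else 0).

Definition inSO (A : 'M[R]_m) : Prop := A^T *m A = 1%:M /\ \det A = 1.
Definition inSp (D : 'M[R]_(2 * n)) : Prop :=
  D \in unitmx /\ D^T *m Jsymp *m D = Jsymp.

(* f |-> f(g.x): the algebra morphism x_i |-> sum_k A_ik x_k,
   theta_j |-> sum_l D_jl theta_l *)
Definition thlin (D : 'M[R]_(2 * n)) (j : gidx) : superpoly :=
  \sum_(l : gidx) D j l *: thgen l.
Definition thprod (D : 'M[R]_(2 * n)) (S : {set gidx}) : superpoly :=
  foldr smul sone [seq thlin D j | j <- enum S].
Definition xsubst (A : 'M[R]_m) : m.-tuple {mpoly R[m]} :=
  [tuple \sum_(k < m) (A i k)%:MP * 'X_k | i < m].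
Definition gact (A : 'M[R]_m) (D : 'M[R]_(2 * n)) (f : superpoly) : superpoly :=
  \sum_(S : {set gidx}) smul (sembed (comp_mpoly (xsubst A) (f S))) (thprod D S).

Definition supersphere_integration (T : superpoly -> R) : Prop :=
  [/\ (forall (a : R) (f g : superpoly), T (a *: f + g) = a * T f + T g),
      (forall f, T (smul xsq f) = - T f)
    & (forall A D f, inSO A -> inSp D -> T (gact A D f) = T f)].

Definition is_subspace (H : superpoly -> Prop) : Prop :=
  H 0 /\ forall (a : R) f g, H f -> H g -> H (a *: f + g).
Definition G_invariant (H : superpoly -> Prop) : Prop :=
  forall A D f, inSO A -> inSp D -> H f -> H (gact A D f).
Definition G_irreducible (H : superpoly -> Prop) : Prop :=
  forall K : superpoly -> Prop, is_subspace K -> G_invariant K ->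
    (forall f, K f -> H f) ->
    (forall f, K f -> f = 0) \/ (forall f, H f -> K f).
Definition dim_gt1 (H : superpoly -> Prop) : Prop :=
  exists f g, [/\ H f, H g &
    forall a b : R, a *: f + b *: g = 0 -> a = 0 /\ b = 0].

End Superspace.

From HB Require Import structures.
From mathcomp Require Import all_boot all_order all_algebra.
From mathcomp Require Import reals.
From mathcomp Require Import mpoly.
Set Implicit Arguments.
Unset Strict Implicit.
Unset Printing Implicit Defensive.

Import Order.TTheory GRing.Theory Num.Theory.
Local Open Scope ring_scope.

(* The restriction of T to H is a G-invariant linear form, so its kernel in H
   is a G-invariant subspace of codimension at most one.  By irreducibility
   this kernel is either 0 or all of H, and it cannot be 0 because H contains
   two independent vectors, some nonzero combination of which T kills. *)

Section LinearForm.
Variables (K : fieldType) (V : lmodType K) (T : V -> K).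
Hypothesis T_linear : forall a f g, T (a *: f + g) = a * T f + T g.

Lemma linear_form0 : T 0 = 0.
Proof.
have := T_linear 1 0 0; rewrite scaler0 addr0 mul1r.
by move=> /(congr1 (fun x => x - T 0)); rewrite subrr addrK.
Qed.

Lemma linear_formZ a f : T (a *: f) = a * T f.
Proof. by rewrite -[a *: f]addr0 T_linear linear_form0 addr0. Qed.

Lemma linear_form_kills_independent_pair f g :
  (forall a b, a *: f + b *: g = 0 -> a = 0 /\ b = 0) ->
  exists a b, T (a *: f + b *: g) = 0 /\ a *: f + b *: g != 0.
Proof.
move=> indep; have [Tf0 | Tf_neq0] := eqVneq (T f) 0.
  exists 1, 0; split; first by rewrite scale0r addr0 scale1r.
  by apply/eqP => /indep [/eqP]; rewrite oner_eq0.
exists (T g), (- T f); split.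
  by rewrite T_linear !linear_formZ mulNr mulrC subrr.
by apply/eqP => /indep [_ /eqP]; rewrite oppr_eq0 (negPf Tf_neq0).
Qed.

End LinearForm.

Section KernelOnSubspace.
Variables (R : realType) (m n : nat).
Implicit Types (H : superpoly R m n -> Prop) (T : superpoly R m n -> R).

Lemma subspace_comb H a b f g :
  is_subspace H -> H f -> H g -> H (a *: f + b *: g).
Proof.
move=> [H0 Hlin] Hf Hg; apply: (Hlin) => //.
by rewrite -[b *: g]addr0; apply: Hlin.
Qed.

Lemma kernel_on_subspace H T :
  (forall a f g, T (a *: f + g) = a * T f + T g) ->
  is_subspace H -> is_subspace (fun f => H f /\ T f = 0).
Proof.
move=> T_linear [H0 Hlin]; split; first by split; last exact: linear_form0.
move=> a f g [Hf Tf0] [Hg Tg0]; split; first exact: Hlin.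
by rewrite T_linear Tf0 Tg0 mulr0 addr0.
Qed.

Lemma kernel_on_G_invariant H T :
  (forall A D f, inSO A -> inSp D -> T (gact A D f) = T f) ->
  G_invariant H -> G_invariant (fun f => H f /\ T f = 0).
Proof.
by move=> T_inv H_inv A D f SOA SpD [Hf Tf0]; split; [apply: H_inv | rewrite T_inv].
Qed.

End KernelOnSubspace.

Theorem mainTheorem7 (R : realType) (m n : nat)
  (hM : forall k : nat, (m%:Z - (2 * n)%N%:Z) != - (2 * k)%N%:Z)
  (H : superpoly R m n -> Prop)
  (hsub : is_subspace H) (hinv : G_invariant H)
  (hirr : G_irreducible H) (hdim : dim_gt1 H)
  (T : superpoly R m n -> R) (hT : supersphere_integration T) :
  forall f, H f -> T f = 0.
Proof.
case: hT => T_linear _ T_inv.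
have ker_sub := kernel_on_subspace T_linear hsub.
have ker_inv := kernel_on_G_invariant T_inv hinv.
case: (hirr _ ker_sub ker_inv (fun f => @proj1 _ _)) => [ker0 | kerH]; last first.
  by move=> f /kerH [].
case: hdim => f [g [Hf Hg indep]].
have [a [b [Tab0 ab_neq0]]] := linear_form_kills_independent_pair T_linear indep.
have comb_in_ker : H (a *: f + b *: g) /\ T (a *: f + b *: g) = 0.
  by split; first exact: subspace_comb.
by rewrite (ker0 _ comb_in_ker) eqxx in ab_neq0.
Qed.
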